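(* For every integer $m\geq 2$ and every integer $n\geq 3$, the graph $mTL_n$ (the disjoint union of $m$ copies of the triangular ladder $TL_n$) is $C_3$-supermagic.
   Context: All graphs are finite and simple. For a graph $H$, a graph $G=(V,E)$ has an $H$-covering if every edge of $G$ belongs to a subgraph of $G$ isomorphic to $H$. For such $G$, an $H$-magic labeling is a bijection $\lambda: V\cup E\to\{1,2,\dots,|V|+|E|\}$ for which there is a constant $c$ such that for every subgraph $H'=(V',E')$ of $G$ isomorphic to $H$, $\sum_{v\in V'}\lambda(v)+\sum_{e\in E'}\lambda(e)=c$. It is $H$-supermagic if moreover $\{\lambda(v):v\in V\}=\{1,\dots,|V|\}$; $G$ is $H$-supermagic if it admits such a labeling. $C_k$ is the cycle of length $k$. $mG$ denotes the disjoint union of $m$ copies of $G$. The triangular ladder $TL_n$ has vertices $u_i,v_i$ ($1\le i\le n$) and edges $u_iv_i$ ($1\le i\le n$), and $u_iu_{i+1}$, $v_iv_{i+1}$, $u_{i+1}v_i$ ($1\le i\le n-1$). *)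

From mathcomp Require Import all_boot.
Unset Printing Implicit Defensive.

(* A finite simple graph is a finType V of vertices with a symmetric,
   irreflexive adjacency relation adj : rel V.  Edges are the 2-element
   vertex sets {x, y} with adj x y. *)

Definition edge_set {V : finType} (adj : rel V) : {set {set V}} :=
  [set e : {set V} | [exists x, exists y, adj x y && (e == [set x; y])]].

Definition edge_type {V : finType} (adj : rel V) : finType :=
  {e : {set V} | e \in edge_set adj}.

Definition elt_type {V : finType} (adj : rel V) : finType :=
  (V + edge_type adj)%type.

Definition subgraph_iso {V W : finType} (adj : rel V) (adjH : rel W)
    (V' : {set V}) (E' : {set edge_type adj}) : Prop :=
  (forall e : edge_type adj, e \in E' -> val e \subset V') /\
  exists f : W -> V, injective f /\ V' = f @: [set: W] /\
    forall a b, adjH a b = ([set f a; f b] \in [set val e | e in E']).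

Definition H_covering {V W : finType} (adj : rel V) (adjH : rel W) : Prop :=
  forall e : edge_type adj, exists V' E',
    subgraph_iso adj adjH V' E' /\ e \in E'.

Definition weight {V : finType} (adj : rel V) (lam : elt_type adj -> nat)
    (V' : {set V}) (E' : {set edge_type adj}) : nat :=
  \sum_(v in V') lam (inl v) + \sum_(e in E') lam (inr e).

Definition total_labeling {V : finType} (adj : rel V)
    (lam : elt_type adj -> nat) : Prop :=
  injective lam /\
  forall k, (0 < k <= #|V| + #|edge_set adj|) <-> exists x, lam x = k.

Definition H_magic_labeling {V W : finType} (adj : rel V) (adjH : rel W)
    (lam : elt_type adj -> nat) : Prop :=
  total_labeling adj lam /\
  exists c, forall V' E', subgraph_iso adj adjH V' E' -> weight adj lam V' E' = c.

Definition H_supermagic_labeling {V W : finType} (adj : rel V) (adjH : rel W)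
    (lam : elt_type adj -> nat) : Prop :=
  H_magic_labeling adj adjH lam /\
  forall k, (0 < k <= #|V|) <-> exists v, lam (inl v) = k.

Definition H_supermagic {V W : finType} (adj : rel V) (adjH : rel W) : Prop :=
  H_covering adj adjH /\ exists lam, H_supermagic_labeling adj adjH lam.

Definition cycle_adj (k : nat) : rel 'I_k :=
  fun i j => (val j == (val i).+1 %% k) || (val i == (val j).+1 %% k).

(* Triangular ladder TL_n: vertex (i, false) = u_{i+1}, (i, true) = v_{i+1}
   (0-based indices).  Edges u_i v_i, u_i u_{i+1}, v_i v_{i+1}, u_{i+1} v_i. *)
Definition TL_adj (n : nat) : rel ('I_n * bool) :=
  fun x y =>
    let: (i, a) := x in let: (j, b) := y in
    [|| (i == j) && (a != b),
        (a == b) && ((val j == (val i).+1) || (val i == (val j).+1)),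
        [&& ~~ a, b & val i == (val j).+1] |
        [&& a, ~~ b & val j == (val i).+1] ].

Definition copies_adj (m : nat) {V : finType} (adj : rel V) : rel ('I_m * V) :=
  fun x y => (x.1 == y.1) && adj x.2 y.2.

From mathcomp Require Import all_boot zify.

(* List the vertices of TL_n as u_1, v_1, u_2, v_2, ...: then TL_n is the square of the
   path on 2n vertices, its triangles are the triples of consecutive positions p, p+1,
   p+2, and every edge lies in one of them.  In copy j of mTL_n the vertex at position p
   gets label m p + j + 1, so the vertices get 1, ..., 2mn; the edges {p, p+1} get the
   top labels counted down in the same order, and the edges {p, p+2} the labels just
   below those.  Along a triangle the three vertex labels grow by 3m per step of p and
   the three edge labels drop by 3m, so every triangle has the same weight. *)

Set Implicit Arguments.
Unset Strict Implicit.

Lemma eq_set2 (T : finType) (a b x y : T) : a != b -> [set a; b] = [set x; y] ->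
  (a = x /\ b = y) \/ (a = y /\ b = x).
Proof.
move=> ab E; have := set21 a b; have := set22 a b; rewrite E.
by do 2!case/set2P=> ?; subst; first [by left | by right | by rewrite eqxx in ab].
Qed.

Lemma cycle3E (a b : 'I_3) : cycle_adj 3 a b = (a != b).
Proof. by case: a b => [[|[|[|a]]] ha] [[|[|[|b]]] hb]. Qed.

Lemma card_labeling (T : finType) (lab : T -> nat) K : injective lab ->
  (forall k, 0 < k <= K <-> exists x, lab x = k) -> #|T| = K.
Proof.
move=> lab_inj lab_im; rewrite cardE -(size_map lab) -(size_iota 1 K).
apply/perm_size/uniq_perm; [by rewrite map_inj_uniq ?enum_uniq | exact: iota_uniq |].
move=> k; rewrite mem_iota; apply/mapP/idP => [[x _ ->] | hk].
  by have /lab_im : exists y, lab y = lab x by exists x.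
by have [|x <-] := (lab_im k).1; [lia | exists x; rewrite ?mem_enum].
Qed.

Lemma total_labeling_onto (V : finType) (adj : rel V) (lam : elt_type adj -> nat) K :
  injective lam -> (forall k, 0 < k <= K <-> exists x, lam x = k) ->
  total_labeling adj lam.
Proof.
move=> lam_inj lam_im; split=> // k.
suff -> : #|V| + #|edge_set adj| = K by exact: lam_im.
by rewrite -(card_labeling lam_inj lam_im) card_sum card_sig; congr (_ + _); apply: eq_card.
Qed.

Local Notation o0 := (@Ordinal 3 0 isT).
Local Notation o1 := (@Ordinal 3 1 isT).
Local Notation o2 := (@Ordinal 3 2 isT).

Lemma ord3P (a : 'I_3) : [\/ a = o0, a = o1 | a = o2].
Proof.
by case: a => [[|[|[|a]]] ha] //; [apply: Or31 | apply: Or32 | apply: Or33]; apply: val_inj.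
Qed.

Lemma sum_ord3 (F : 'I_3 -> nat) : \sum_(a in [set: 'I_3]) F a = F o0 + F o1 + F o2.
Proof.
rewrite (eq_bigl xpredT); last by move=> a; rewrite /= in_setT.
rewrite !big_ord_recl big_ord0 addn0 addnA.
by congr (F _ + F _ + F _); apply: val_inj.
Qed.

Lemma sum_set3 (T : finType) (F : T -> nat) a b c : a != b -> a != c -> b != c ->
  \sum_(x in [set a; b; c]) F x = F a + F b + F c.
Proof.
move=> ab ac bc; rewrite -setUA big_setU1 /=; last by rewrite !inE negb_or ab ac.
by rewrite big_setU1 ?big_set1 ?inE // addnA.
Qed.

Section SimpleGraph.
Variables (V : finType) (adj : rel V).

Lemma edge_typeP (e : edge_type adj) : exists x y, adj x y /\ val e = [set x; y].
Proof.
by have /[!inE]/existsP[x /existsP[y /andP[xy /eqP ->]]] := valP e; exists x, y.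
Qed.

Lemma edge_set2 x y : adj x y -> [set x; y] \in edge_set adj.
Proof.
by move=> xy; rewrite inE; apply/existsP; exists x; apply/existsP; exists y; rewrite xy /=.
Qed.

Definition edge_of x y (xy : adj x y) : edge_type adj := exist _ [set x; y] (edge_set2 xy).

Hypotheses (adj_sym : symmetric adj) (adj_irr : irreflexive adj).

Lemma edge_setE x y : ([set x; y] \in edge_set adj) = adj x y.
Proof.
apply/idP/idP => [|/edge_set2 //].
rewrite inE => /existsP[u /existsP[w /andP[uw /eqP E]]].
have u_w : u != w by apply: contraTneq uw => ->; rewrite adj_irr.
by case: (eq_set2 u_w (esym E)) => -[<- <-]; rewrite // adj_sym.
Qed.

Lemma induced_subgraph_iso (W : finType) (adjH : rel W) (f : W -> V) :
  injective f -> (forall a b, adjH a b = adj (f a) (f b)) ->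
  subgraph_iso adj adjH (f @: setT) [set e : edge_type adj | val e \subset f @: setT].
Proof.
move=> f_inj f_adj; split=> [e|]; first by rewrite inE.
exists f; do 2!split=> //; move=> a b; rewrite f_adj.
apply/idP/imsetP => [fab | [e _ E]]; last by rewrite -edge_setE E (valP e).
exists (edge_of fab) => //; rewrite inE.
by apply/subsetP => v /set2P[] ->; apply: imset_f; rewrite inE.
Qed.

Lemma triangle_weight (lam : elt_type adj -> nat) V' E' :
  subgraph_iso adj (cycle_adj 3) V' E' ->
  exists x y z (exy exz eyz : edge_type adj),
    [/\ val exy = [set x; y], val exz = [set x; z], val eyz = [set y; z] &
        weight adj lam V' E' = lam (inl x) + lam (inl y) + lam (inl z)
                             + (lam (inr exy) + lam (inr exz) + lam (inr eyz))].
Proof.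
case=> E'V' [f [f_inj [V'f f_adj]]]; subst V'.
have edge_in a b : a != b -> exists2 e, e \in E' & val e = [set f a; f b].
  by move=> ab; move: (f_adj a b); rewrite cycle3E ab => /esym/imsetP[e ? ->]; exists e.
have [e01 E'e01 v01] := edge_in o0 o1 isT.
have [e02 E'e02 v02] := edge_in o0 o2 isT.
have [e12 E'e12 v12] := edge_in o1 o2 isT.
exists (f o0), (f o1), (f o2), e01, e02, e12; split=> //.
have E'E : E' = [set e01; e02; e12].
  apply/setP => e; apply/idP/idP => [eE' | ]; last by rewrite !inE -orbA => /or3P[] /eqP ->.
  have [u [w [uw ve]]] := edge_typeP e.
  have /imsetP[a _ ua] : u \in f @: setT by apply: (subsetP (E'V' e eE')); rewrite ve set21.
  have /imsetP[b _ wb] : w \in f @: setT by apply: (subsetP (E'V' e eE')); rewrite ve set22.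
  suff : [\/ val e = val e01, val e = val e02 | val e = val e12].
    by case=> /val_inj ->; rewrite !inE eqxx ?orbT.
  rewrite {}ua {}wb in uw ve; rewrite ve v01 v02 v12.
  case: (ord3P a) uw => ->; case: (ord3P b) => ->; rewrite ?adj_irr // => _.
  1-6: rewrite ?[[set f _; f o0]]setUC ?[[set f o2; f o1]]setUC.
  1-6: by [apply: Or31 | apply: Or32 | apply: Or33].
have edge_ne v (e e' : edge_type adj) : v \in val e -> v \notin val e' -> e != e'.
  by move=> ve; apply: contraNneq => <-.
rewrite /weight big_imset /=; last by move=> a b _ _ /f_inj.
rewrite sum_ord3 E'E sum_set3 //.
- by apply: (edge_ne (f o1)); rewrite ?v01 ?v02 !inE ?(inj_eq f_inj).
- by apply: (edge_ne (f o0)); rewrite ?v01 ?v12 !inE ?(inj_eq f_inj).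
- by apply: (edge_ne (f o0)); rewrite ?v02 ?v12 !inE ?(inj_eq f_inj).
Qed.
End SimpleGraph.

Definition ladder_pos k (x : 'I_k * bool) : nat := x.1.*2 + x.2.

Definition ladder_at n (p : nat) : 'I_n.+1 * bool := (inord p./2, odd p).

Lemma ladder_pos_inj k : injective (@ladder_pos k).
Proof.
move=> [i a] [j b]; rewrite /ladder_pos /= => ij; have ab : a = b by case: a b ij => [] [] /=; lia.
by subst b; congr (_, _); apply: val_inj => /=; lia.
Qed.

Lemma ladder_pos_lt k (x : 'I_k * bool) : ladder_pos x < k.*2.
Proof. by case: x => i [|]; rewrite /ladder_pos /=; have := ltn_ord i; lia. Qed.

Lemma ladder_atK n p : p < n.+1.*2 -> ladder_pos (ladder_at n p) = p.
Proof.
by move=> lt_p; rewrite /ladder_pos /= inordK; [rewrite addnC odd_double_half | lia].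
Qed.

Lemma ladder_posK n : cancel (@ladder_pos n.+1) (ladder_at n).
Proof. by move=> x; apply: ladder_pos_inj; rewrite ladder_atK ?ladder_pos_lt. Qed.

Definition sqpath_adj (p q : nat) : bool := [|| q == p + 1, p == q + 1, q == p + 2 | p == q + 2].

Lemma TL_adjE k x y : TL_adj k x y = sqpath_adj (ladder_pos x) (ladder_pos y).
Proof.
case: x y => [i a] [j b]; rewrite /TL_adj /sqpath_adj /ladder_pos /=.
by have -> : (i == j) = (i == j :> nat) by []; case: a; case: b => /=; lia.
Qed.

Lemma radix_inj m p j p' j' : j < m -> j' < m -> m * p + j = m * p' + j' -> p = p' /\ j = j'.
Proof.
move=> lt_j lt_j' eq_pj; have m_gt0 : 0 < m by lia.
have := congr1 (divn^~ m) eq_pj; have := congr1 (modn^~ m) eq_pj.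
by rewrite ![m * _]mulnC !divnMDl // !modnMDl !divn_small // !modn_small // !addn0 => -> ->.
Qed.

Lemma radix_decomp m K k : k < m * K -> exists p (j : 'I_m), p < K /\ k = m * p + j.
Proof.
move=> lt_k; have m_gt0 : 0 < m by case: m lt_k.
exists (k %/ m), (Ordinal (ltn_pmod k m_gt0)).
by rewrite ltn_divLR // mulnC /= [in RHS]mulnC -divn_eq.
Qed.

Section CopiesOfTL.
Variables m n : nat.
Local Notation N := n.+1.
Local Notation vertex := ('I_m * ('I_N * bool))%type.
Local Notation mTL := (copies_adj m (TL_adj N)).

Lemma mTL_adjE (x y : vertex) :
  mTL x y = (x.1 == y.1) && sqpath_adj (ladder_pos x.2) (ladder_pos y.2).
Proof. by rewrite /copies_adj TL_adjE. Qed.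

Lemma mTL_sym : symmetric mTL.
Proof. by move=> x y; rewrite !mTL_adjE eq_sym /sqpath_adj; congr (_ && _); lia. Qed.

Lemma mTL_irr : irreflexive mTL.
Proof. by move=> x; rewrite mTL_adjE /sqpath_adj; lia. Qed.

Lemma mTL_edgeP (e : edge_type mTL) : exists (j : 'I_m) x y,
  val e = [set (j, x); (j, y)] /\
  (ladder_pos y = ladder_pos x + 1 \/ ladder_pos y = ladder_pos x + 2).
Proof.
have [[j x] [[j' y] []]] := edge_typeP e; rewrite mTL_adjE /= => /andP[/eqP <- xy] ->.
move: xy; rewrite /sqpath_adj => /or4P[] /eqP d;
  [exists j, x, y | exists j, y, x | exists j, x, y | exists j, y, x];
  rewrite ?[[set (j, y); _]]setUC; split=> //; lia.
Qed.

(* An edge {p, q} with q - p in {1, 2} is determined by p + q, which is odd exactly when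
   q = p + 1.  label_max = |V| + |E|, and the (2N - 1) m edges {p, p+1} take the labels
   long_edge_max + 1, ..., label_max. *)
Definition label_max := 6 * (m * N) - 3 * m.
Definition long_edge_max := 4 * (m * N) - 2 * m.

Definition edge_label (j s : nat) : nat :=
  if odd s then label_max - m * s./2 - j else long_edge_max - m * s./2.-1 - j.

Lemma edge_label_short j p : edge_label j (p + (p + 1)) = label_max - m * p - j.
Proof.
have -> : p + (p + 1) = p.*2.+1 by lia.
by rewrite /edge_label /= odd_double uphalf_double.
Qed.

Lemma edge_label_long j p : edge_label j (p + (p + 2)) = long_edge_max - m * p - j.
Proof.
have -> : p + (p + 2) = p.*2.+2 by lia.
by rewrite /edge_label /= odd_double doubleK.
Qed.

Definition vlabel (v : vertex) : nat := m * ladder_pos v.2 + v.1 + 1.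

(* The endpoints of an edge lie in the same copy, whose index is thus their maximum. *)
Definition elabel (e : edge_type mTL) : nat :=
  edge_label (\max_(v in val e) v.1) (\sum_(v in val e) ladder_pos v.2).

Definition label (x : elt_type mTL) : nat :=
  match x with inl v => vlabel v | inr e => elabel e end.

Lemma elabel_pair e (j : 'I_m) x y : x != y -> val e = [set (j, x); (j, y)] ->
  elabel e = edge_label j (ladder_pos x + ladder_pos y).
Proof.
move=> xy ve; have jxy : (j, x) != (j, y) by rewrite xpair_eqE eqxx.
by rewrite /elabel ve !big_setU1 ?big_set1 ?inE //= maxnn.
Qed.

Lemma mul_ladder_pos_lt (y : 'I_N * bool) : m * (ladder_pos y).+1 <= m * N.*2.
Proof. exact/leq_mul/ladder_pos_lt. Qed.

Lemma elabelP e : exists (j : 'I_m) x y, val e = [set (j, x); (j, y)] /\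
  ((ladder_pos y = ladder_pos x + 1 /\
    elabel e = label_max - (m * ladder_pos x + j) /\ long_edge_max < elabel e) \/
   (ladder_pos y = ladder_pos x + 2 /\
    elabel e = long_edge_max - (m * ladder_pos x + j) /\ (m * N).*2 < elabel e <= long_edge_max)).
Proof.
have [j [x [y [ve d]]]] := mTL_edgeP e; exists j, x, y; split=> //.
have xy : x != y by apply/eqP => exy; move: d; rewrite exy; lia.
have := mul_ladder_pos_lt y; have := ltn_ord j.
rewrite (elabel_pair xy ve); case: d => ->; [left | right].
  by rewrite edge_label_short /label_max /long_edge_max; lia.
by rewrite edge_label_long /long_edge_max; lia.
Qed.

Lemma vlabel_range v : 0 < vlabel v <= (m * N).*2.
Proof. by rewrite /vlabel; have := mul_ladder_pos_lt v.2; have := ltn_ord v.1; lia. Qed.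

Lemma elabel_range e : (m * N).*2 < elabel e <= label_max.
Proof.
have : (m * N).*2 <= long_edge_max <= label_max by rewrite /long_edge_max /label_max; lia.
by have [j [x [y [_ [[_ [-> ?]] | [_ [_ ?]]]]]]] := elabelP e; lia.
Qed.

Lemma vlabel_inj : injective vlabel.
Proof.
move=> [j x] [j' y]; rewrite /vlabel /= => /addIn eq_xy.
by have [/ladder_pos_inj -> /val_inj ->] := radix_inj (ltn_ord j) (ltn_ord j') eq_xy.
Qed.

Lemma elabel_inj : injective elabel.
Proof.
move=> e e' ee'.
have [j [x [y [ve lx]]]] := elabelP e; have [j' [x' [y' [ve' lx']]]] := elabelP e'.
have [eq_pj eq_d] : m * ladder_pos x + j = m * ladder_pos x' + j' /\
                    ladder_pos y - ladder_pos x = ladder_pos y' - ladder_pos x'.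
  by case: lx lx' => -[dy [lx bx]] [[dy' [lx' bx']] | [dy' [lx' bx']]];
    rewrite -ee' in lx' bx'; lia.
have [eq_x eq_j] := radix_inj (ltn_ord j) (ltn_ord j') eq_pj.
have eq_y : ladder_pos y = ladder_pos y' by lia.
apply: val_inj; rewrite ve ve' (ladder_pos_inj eq_x) (ladder_pos_inj eq_y).
by rewrite (val_inj eq_j).
Qed.

Lemma label_inj : injective label.
Proof.
move=> [v|e] [v'|e'] /=; try by [move/vlabel_inj -> | move/elabel_inj ->].
  by have := vlabel_range v; have := elabel_range e'; lia.
by have := vlabel_range v'; have := elabel_range e; lia.
Qed.

Lemma vlabel_image k : 0 < k <= (m * N).*2 <-> exists v, vlabel v = k.
Proof.
split=> [k_range | [v <-]]; last exact: vlabel_range.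
have [|p [j [lt_p eq_k]]] := @radix_decomp m N.*2 k.-1; first lia.
by exists (j, ladder_at n p); rewrite /vlabel /= ladder_atK //; lia.
Qed.

Lemma elabel_at (j : 'I_m) p d : 0 < d <= 2 -> p + d < N.*2 ->
  exists e, elabel e = edge_label j (p + (p + d)).
Proof.
move=> d12 lt_pd; set x := ladder_at n p; set y := ladder_at n (p + d).
have px : ladder_pos x = p by rewrite ladder_atK //; lia.
have py : ladder_pos y = p + d by rewrite ladder_atK.
have xy : mTL (j, x) (j, y) by rewrite mTL_adjE /= eqxx px py /sqpath_adj; lia.
exists (edge_of xy); rewrite (@elabel_pair (edge_of xy) j x y) ?px ?py //.
by apply/eqP => exy; move: py; rewrite -exy px; lia.
Qed.

Lemma label_image k : 0 < k <= label_max <-> exists x, label x = k.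
Proof.
split=> [k_range | [[v|e] <-] /=]; last 2 first.
- by have := vlabel_range v; rewrite /label_max; lia.
- by have := elabel_range e; lia.
case: (leqP k (m * N).*2) => [k_le | k_gt].
  by have [v <-] := (vlabel_image k).1 (ltac:(lia)); exists (inl v).
case: (leqP k long_edge_max) => [k_le | k_gt'].
  have [|p [j [lt_p eq_k]]] := @radix_decomp m n.*2 (long_edge_max - k).
    by move: k_gt k_le; rewrite /long_edge_max; lia.
  have [e ee] := @elabel_at j p 2 isT (ltac:(lia)).
  by exists (inr e); rewrite /= ee edge_label_long; lia.
have [|p [j [lt_p eq_k]]] := @radix_decomp m n.*2.+1 (label_max - k).
  by move: k_range k_gt'; rewrite /label_max /long_edge_max; lia.
have [e ee] := @elabel_at j p 1 isT (ltac:(lia)).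
by exists (inr e); rewrite /= ee edge_label_short; lia.
Qed.

Definition magic_const := 2 * label_max + long_edge_max + 2 * m + 3.

Definition triangle_label j a b c : nat :=
  m * a + j + 1 + (m * b + j + 1) + (m * c + j + 1)
  + (edge_label j (a + b) + edge_label j (a + c) + edge_label j (b + c)).

Lemma triangle_label_consecutive j p : j < m -> p + 2 < N.*2 ->
  triangle_label j p (p + 1) (p + 2) = magic_const.
Proof.
move=> lt_j lt_p; have : m * (p + 3) <= m * N.*2 by apply: leq_mul => //; lia.
rewrite /triangle_label (_ : p + 1 + (p + 2) = p + 1 + (p + 1 + 1)); last by lia.
rewrite !edge_label_short edge_label_long.
by rewrite /magic_const /label_max /long_edge_max; lia.
Qed.

Lemma triangle_labelC12 j a b c : triangle_label j a b c = triangle_label j b a c.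
Proof. by rewrite /triangle_label (addnC b a); lia. Qed.

Lemma triangle_labelC23 j a b c : triangle_label j a b c = triangle_label j a c b.
Proof. by rewrite /triangle_label (addnC c b); lia. Qed.

Lemma triangle_label_const j a b c : j < m -> a < N.*2 -> b < N.*2 -> c < N.*2 ->
  sqpath_adj a b -> sqpath_adj a c -> sqpath_adj b c -> triangle_label j a b c = magic_const.
Proof.
rewrite /sqpath_adj => lt_j.
wlog lt_abc : a b c / a < b < c => [sorted ? ? ? ? ? ? | _ _ lt_c ab ac _].
  have [o|[o|[o|[o|[o|o]]]]] :
    a < b < c \/ a < c < b \/ b < a < c \/ b < c < a \/ c < a < b \/ c < b < a by lia.
  - by apply: sorted; lia.
  - by rewrite triangle_labelC23; apply: sorted; lia.
  - by rewrite triangle_labelC12; apply: sorted; lia.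
  - by rewrite triangle_labelC12 triangle_labelC23; apply: sorted; lia.
  - by rewrite triangle_labelC23 triangle_labelC12; apply: sorted; lia.
  - by rewrite triangle_labelC12 triangle_labelC23 triangle_labelC12; apply: sorted; lia.
have [-> ->] : b = a + 1 /\ c = a + 2 by lia.
by apply: triangle_label_consecutive; lia.
Qed.

Lemma weight_const V' E' :
  subgraph_iso mTL (cycle_adj 3) V' E' -> weight mTL label V' E' = magic_const.
Proof.
move=> /(triangle_weight mTL_irr label) [x [y [z [exy [exz [eyz [vxy vxz vyz ->]]]]]]].
have adj_of (e : edge_type mTL) u w : val e = [set u; w] -> mTL u w.
  by move=> ve; rewrite -(edge_setE mTL_sym mTL_irr) -ve; apply: valP.
move: (adj_of _ _ _ vxy) (adj_of _ _ _ vxz) (adj_of _ _ _ vyz).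
case: x y z vxy vxz vyz => [j a] [j' b] [j'' c] vxy vxz vyz.
rewrite !mTL_adjE /= => /andP[/eqP jj' ab] /andP[/eqP jj'' ac] /andP[_ bc].
have neq (p q : 'I_N * bool) : sqpath_adj (ladder_pos p) (ladder_pos q) -> p != q.
  by move=> pq; apply: contraTneq pq => ->; rewrite /sqpath_adj; lia.
subst j' j''; rewrite /= (elabel_pair (neq _ _ ab) vxy) (elabel_pair (neq _ _ ac) vxz).
rewrite (elabel_pair (neq _ _ bc) vyz).
exact: triangle_label_const (ltn_ord j) (ladder_pos_lt a) (ladder_pos_lt b) (ladder_pos_lt c)
  ab ac bc.
Qed.

Definition ladder_triangle (j : 'I_m) t (a : 'I_3) : vertex := (j, ladder_at n (t + a)).

Lemma ladder_triangle_iso j t : t + 2 < N.*2 -> subgraph_iso mTL (cycle_adj 3)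
  (ladder_triangle j t @: setT) [set e : edge_type mTL | val e \subset ladder_triangle j t @: setT].
Proof.
move=> lt_t; have pos_tri a : ladder_pos (ladder_triangle j t a).2 = t + a.
  by rewrite ladder_atK //; have := ltn_ord a; lia.
apply: (induced_subgraph_iso mTL_sym mTL_irr) => [a b | a b].
  by move/(congr1 (fun v => ladder_pos v.2)); rewrite !pos_tri => /addnI /val_inj.
rewrite cycle3E mTL_adjE /= eqxx !pos_tri /sqpath_adj -val_eqE /=.
by have := ltn_ord a; have := ltn_ord b; lia.
Qed.

Lemma mem_ladder_triangle j t (x : 'I_N * bool) : t <= ladder_pos x <= t + 2 ->
  (j, x) \in ladder_triangle j t @: setT.
Proof.
move=> le_tx; have lt_3 : ladder_pos x - t < 3 by lia.
apply/imsetP; exists (Ordinal lt_3); rewrite ?inE // /ladder_triangle /=.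
by rewrite subnKC ?ladder_posK //; lia.
Qed.

Lemma mTL_C3_covering : 0 < n -> H_covering mTL (cycle_adj 3).
Proof.
move=> n_gt0 e; have [j [x [y [ve dxy]]]] := mTL_edgeP e; have lt_y := ladder_pos_lt y.
pose t := if ladder_pos x + 2 < N.*2 then ladder_pos x else (ladder_pos x).-1.
have [lt_t le_tx le_yt] : [/\ t + 2 < N.*2, t <= ladder_pos x & ladder_pos y <= t + 2].
  by rewrite /t; case: (ltnP (ladder_pos x + 2) N.*2) => ?; split; lia.
exists (ladder_triangle j t @: setT),
  [set e : edge_type mTL | val e \subset ladder_triangle j t @: setT].
split; first exact: ladder_triangle_iso.
by rewrite inE ve; apply/subsetP => v /set2P[] ->; apply: mem_ladder_triangle; lia.
Qed.

End CopiesOfTL.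

Theorem theorem4 (m n : nat) (hm : 2 <= m) (hn : 3 <= n) :
  H_supermagic (copies_adj m (TL_adj n)) (cycle_adj 3).
Proof.
(* The construction works for every m and every n >= 2. *)
case: n hn => // n hn; split; first by apply: mTL_C3_covering; lia.
exists (@label m n); split; last first.
  move=> k; rewrite (card_labeling (@vlabel_inj m n) (@vlabel_image m n)).
  exact: vlabel_image.
split; first exact: total_labeling_onto (@label_inj m n) (@label_image m n).
by exists (magic_const m n); exact: weight_const.
Qed.
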